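(* Let $c>0$ and $0<q_1<q_2\le 1$, and set $$\rho_1=\frac{\sin\frac{q_1\pi}{2}}{\sin\frac{(q_2-q_1)\pi}{2}},\qquad \rho_2=\frac{\sin\frac{q_2\pi}{2}}{\sin\frac{(q_2-q_1)\pi}{2}}.$$ Then $\rho_1>0$ and $\rho_2>1$. Consider the smooth parametric curve $\Gamma_{c,q_1,q_2}$ in the $(b,a)$-plane given by $$b(\omega)=\rho_1\omega^{q_2}-c\rho_2\omega^{-q_1},\qquad a(\omega)=c\rho_1\omega^{-q_2}-\rho_2\omega^{q_1},\qquad \omega>0.$$ Then $\Gamma_{c,q_1,q_2}$ is the graph of a smooth, decreasing, convex bijective function $a^\star=a^\star_{c,q_1,q_2}:\mathbb{R}\to\mathbb{R}$ (i.e. $a=a^\star(b)$), which satisfies $$a^\star(b)\le (-b)^{q_2/q_1}\,c^{\,1-q_2/q_1}\ \text{ if } b<0,\qquad a^\star(b)\le -b^{q_1/q_2}\ \text{ if } b\ge 0.$$ *)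

From Stdlib Require Import Reals.
From Coquelicot Require Import Coquelicot.
Open Scope R_scope.

Definition rho1 (q1 q2 : R) : R := sin (q1 * PI / 2) / sin ((q2 - q1) * PI / 2).
Definition rho2 (q1 q2 : R) : R := sin (q2 * PI / 2) / sin ((q2 - q1) * PI / 2).

Definition b_curve (c q1 q2 w : R) : R :=
  rho1 q1 q2 * Rpower w q2 - c * rho2 q1 q2 * Rpower w (- q1).
Definition a_curve (c q1 q2 w : R) : R :=
  c * rho1 q1 q2 * Rpower w (- q2) - rho2 q1 q2 * Rpower w q1.

Definition smooth (f : R -> R) : Prop := forall (n : nat) (x : R), ex_derive_n f n x.

Definition strictly_decreasing (f : R -> R) : Prop := forall x y, x < y -> f y < f x.

Definition convex_fun (f : R -> R) : Prop :=
  forall x y t, 0 <= t <= 1 -> f (t * x + (1 - t) * y) <= t * f x + (1 - t) * f y.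

Definition bijective_fun (f : R -> R) : Prop :=
  (forall x y, f x = f y -> x = y) /\ (forall y, exists x, f x = y).

Definition curve_is_graph (c q1 q2 : R) (f : R -> R) : Prop :=
  (forall w, 0 < w -> f (b_curve c q1 q2 w) = a_curve c q1 q2 w) /\
  (forall b, exists w, 0 < w /\ b_curve c q1 q2 w = b).

(* In logarithmic time [w = e^L] the curve is [L |-> (b L, a L)] with [b] and [a]
   sums of two exponentials; [b] increases from [-oo] to [+oo], so [a* = a o b^-1].
   Since [(b^-1)' = 1 / b' o b^-1], the derivatives of [a*] are smooth expressions in
   [b^-1], and [a*' = (a' / b') o b^-1], so convexity is the monotonicity of the slope
   [a' / b'], which holds because [q1 rho2 <= q2 rho1] (concavity of [sin]).  Clearing
   the powers of [e^L], each bound becomes a weighted AM-GM inequality with weight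
   [q1 / q2] followed by a linear estimate that uses [q1 rho2 <= q2 rho1] once more and
   [(q2 - q1) rho2 <= q2 (rho2^2 - rho1^2)]; the latter comes from
   [sin^2 B - sin^2 A = sin (A + B) sin (B - A)]. *)

From Stdlib Require Import Reals Lra Psatz ClassicalEpsilon.
From Coquelicot Require Import Coquelicot.
Open Scope R_scope.

Fixpoint derivable_n (n : nat) (f : R -> R) : Prop :=
  match n with
  | O => True
  | S n => (forall x, ex_derive f x) /\ derivable_n n (Derive f)
  end.

Lemma derivable_n_ext n : forall f g, (forall x, f x = g x) -> derivable_n n f -> derivable_n n g.
Proof.
  induction n as [|n IH]; simpl; auto.
  intros f g Efg [Hf Hf']; split.
  - intro x; apply ex_derive_ext with f; auto.
  - apply IH with (Derive f); auto.
    intro x; apply Derive_ext; auto.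
Qed.

Lemma derivable_n_pred n : forall f, derivable_n (S n) f -> derivable_n n f.
Proof.
  induction n as [|n IH]; simpl; auto.
  intros f [Hf [Hf' Hf'']]; split; auto.
  apply IH; simpl; auto.
Qed.

Lemma derivable_n_plus n : forall f g,
  derivable_n n f -> derivable_n n g -> derivable_n n (fun x => f x + g x).
Proof.
  induction n as [|n IH]; simpl; auto.
  intros f g [Hf Hf'] [Hg Hg']; split.
  - intro x; exact (ex_derive_plus f g x (Hf x) (Hg x)).
  - apply derivable_n_ext with (fun x => Derive f x + Derive g x); auto.
    intro x; rewrite Derive_plus; auto.
Qed.

Lemma derivable_n_mult n : forall f g,
  derivable_n n f -> derivable_n n g -> derivable_n n (fun x => f x * g x).
Proof.
  induction n as [|n IH]; simpl; auto.
  intros f g Df Dg.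
  assert (Df1 := derivable_n_pred n f Df). assert (Dg1 := derivable_n_pred n g Dg).
  destruct Df as [Hf Hf'], Dg as [Hg Hg']; split.
  - intro x; apply ex_derive_mult; auto.
  - apply derivable_n_ext with (fun x => Derive f x * g x + f x * Derive g x).
    + intro x; rewrite Derive_mult; auto.
    + apply derivable_n_plus; apply IH; auto.
Qed.

Lemma derivable_n_div n : forall g, (forall x, g x <> 0) -> derivable_n n g ->
  forall k, derivable_n n (fun x => k / g x).
Proof.
  induction n as [|n IH]; simpl; auto.
  intros g Hg0 Dg k. assert (Dg1 := derivable_n_pred n g Dg).
  destruct Dg as [Hg Hg']; split.
  - intro x; apply ex_derive_scal, ex_derive_inv; auto.
  - apply derivable_n_ext with (fun x => Derive g x * (1 / g x * (- k / g x))).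
    + intro x. unfold Rdiv at 3. rewrite Derive_scal, Derive_inv; auto. field; auto.
    + apply derivable_n_mult; auto. apply derivable_n_mult; auto.
Qed.

(* [g' = phi o g] with [phi] smooth: this is how the derivatives of an inverse
   function are controlled. *)
Lemma derivable_n_comp_ode n : forall (g phi h : R -> R),
  (forall x, is_derive g x (phi (g x))) -> (forall m, derivable_n m phi) ->
  derivable_n n h -> derivable_n n (fun x => h (g x)).
Proof.
  induction n as [|n IH]; simpl; auto.
  intros g phi h Hg Dphi [Hh Hh']; split.
  - intro x; apply ex_derive_comp; auto. eexists; apply Hg.
  - apply derivable_n_ext with (fun x => (fun y => Derive h y * phi y) (g x)).
    + intro x; apply sym_eq, is_derive_unique. rewrite Rmult_comm.
      apply (is_derive_comp h g x); auto. apply Derive_correct; auto.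
    + apply (IH g phi (fun y => Derive h y * phi y)); auto.
      apply derivable_n_mult; auto.
Qed.

Lemma Derive_n_Derive f n x : Derive_n f (S n) x = Derive_n (Derive f) n x.
Proof.
  revert x; induction n as [|n IH]; intro x; simpl; auto.
  apply Derive_ext; exact IH.
Qed.

Lemma ex_derive_Derive_n n : forall f, derivable_n (S n) f -> forall x, ex_derive (Derive_n f n) x.
Proof.
  induction n as [|n IH]; intros f [Hf Hf'] x; simpl; auto.
  apply ex_derive_ext with (Derive_n (Derive f) n).
  - intro y; apply sym_eq, Derive_n_Derive.
  - apply IH; auto.
Qed.

Lemma smooth_of_derivable_n f : (forall n, derivable_n n f) -> smooth f.
Proof. intros Df [|n] x; simpl; auto. apply ex_derive_Derive_n; auto. Qed.

Lemma nondecreasing_of_derive_nonneg f f' : (forall x, is_derive f x (f' x)) ->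
  (forall x, 0 <= f' x) -> forall x y, x <= y -> f x <= f y.
Proof.
  intros Df Hf'.
  apply (nonneg_derivative_1 f (fun x => exist _ (f' x) (proj1 (is_derive_Reals f x _) (Df x)))).
  exact Hf'.
Qed.

Lemma convex_of_derive_nondecreasing f f' : (forall x, is_derive f x (f' x)) ->
  (forall x y, x <= y -> f' x <= f' y) -> convex_fun f.
Proof.
  intros Df Hf'.
  assert (tangent_below : forall u z, f z + f' z * (u - z) <= f u).
  { intros u z. destruct (Rtotal_order u z) as [Huz|[<-|Hzu]].
    - destruct (MVT_cor2 f f' u z) as [m [Em Hm]]; auto.
      { intros; apply is_derive_Reals; auto. }
      pose proof (Hf' m z ltac:(lra)). nra.
    - lra.
    - destruct (MVT_cor2 f f' z u) as [m [Em Hm]]; auto.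
      { intros; apply is_derive_Reals; auto. }
      pose proof (Hf' z m ltac:(lra)). nra. }
  intros x y t Ht.
  pose proof (tangent_below x (t * x + (1 - t) * y)).
  pose proof (tangent_below y (t * x + (1 - t) * y)).
  nra.
Qed.

Lemma Rpower_weighted_am_gm x y t : 0 < x -> 0 < y -> 0 <= t <= 1 ->
  Rpower x t * Rpower y (1 - t) <= t * x + (1 - t) * y.
Proof.
  intros Hx Hy Ht.
  assert (exp_convex : convex_fun exp).
  { apply (convex_of_derive_nondecreasing exp exp).
    - intro z; apply is_derive_exp.
    - intros u v [Huv|<-]; [left; apply exp_increasing; auto | lra]. }
  pose proof (exp_convex (ln x) (ln y) t Ht) as Hc.
  rewrite !exp_ln in Hc by assumption.
  unfold Rpower; rewrite <- exp_plus; exact Hc.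
Qed.

Definition inverse (f : R -> R) (y : R) : R := epsilon (inhabits 0) (fun x => f x = y).

Section Inverse.

Variables f f' : R -> R.
Hypothesis f_derive : forall x, is_derive f x (f' x).
Hypothesis f'_pos : forall x, 0 < f' x.
Hypothesis f_surjective : forall y, exists x, f x = y.

Lemma increasing_of_derive_pos x y : x < y -> f x < f y.
Proof.
  intro Hxy; apply (incr_function f m_infty p_infty f'); simpl; auto.
  intros z _ _; apply f'_pos.
Qed.

Lemma f_inverse y : f (inverse f y) = y.
Proof. unfold inverse; apply epsilon_spec, f_surjective. Qed.

Lemma inverse_f x : inverse f (f x) = x.
Proof.
  set (y := inverse f (f x)). assert (Ey : f y = f x) by apply f_inverse.
  destruct (Rtotal_order y x) as [H|[H|H]]; auto;
    apply increasing_of_derive_pos in H; lra.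
Qed.

Lemma inverse_increasing x y : x < y -> inverse f x < inverse f y.
Proof.
  intro Hxy. destruct (Rlt_le_dec (inverse f x) (inverse f y)) as [H|[H|H]]; auto.
  - apply increasing_of_derive_pos in H. rewrite !f_inverse in H. lra.
  - apply (f_equal f) in H. rewrite !f_inverse in H. lra.
Qed.

Lemma inverse_le x y : x <= y -> inverse f x <= inverse f y.
Proof. intros [H|<-]; [left; apply inverse_increasing; auto | lra]. Qed.

Lemma inverse_continuous y : continuity_pt (inverse f) y.
Proof.
  set (x := inverse f y).
  apply (Ranalysis5.continuity_pt_recip_interv f (inverse f) (x - 1) (x + 1)).
  - lra.
  - intros; apply increasing_of_derive_pos; auto.
  - intros; apply f_inverse.
  - intros z Hlo Hhi. rewrite <- (inverse_f (x - 1)), <- (inverse_f (x + 1)).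
    split; apply inverse_le; auto.
  - intros z _. apply derivable_continuous_pt. exists (f' z). apply is_derive_Reals; auto.
  - assert (Ex : f x = y) by apply f_inverse.
    rewrite <- Ex; split; apply increasing_of_derive_pos; lra.
Qed.

Lemma is_derive_inverse y : is_derive (inverse f) y (/ f' (inverse f y)).
Proof.
  set (g := inverse f).
  pose (Df := fun z (_ : g (y - 1) <= z <= g (y + 1)) =>
    exist (fun l => derivable_pt_abs f z l) (f' z) (proj1 (is_derive_Reals _ _ _) (f_derive z))).
  assert (Hg : g (y - 1) <= g y <= g (y + 1)) by (split; apply inverse_le; lra).
  assert (Df0 : derive_pt f (g y) (Df (g y) Hg) <> 0) by (simpl; apply Rgt_not_eq, f'_pos).
  pose proof (Ranalysis5.derivable_pt_lim_recip_interv f g (y - 1) (y + 1) y Df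
    (inverse_continuous y) ltac:(lra) ltac:(lra) Hg (fun z _ => f_inverse z) Df0) as D.
  apply is_derive_Reals. simpl in D. rewrite Rdiv_1_l in D. exact D.
Qed.

End Inverse.

Definition expsum (a p b q x : R) : R := a * exp (p * x) + b * exp (q * x).

Lemma is_derive_expsum a p b q x :
  is_derive (expsum a p b q) x (expsum (a * p) p (b * q) q x).
Proof. unfold expsum; auto_derive; auto; ring. Qed.

Lemma derivable_n_expsum n : forall a p b q, derivable_n n (expsum a p b q).
Proof.
  induction n as [|n IH]; simpl; auto.
  intros a p b q; split.
  - intro x; eexists; apply is_derive_expsum.
  - apply derivable_n_ext with (expsum (a * p) p (b * q) q); auto.
    intro x; apply sym_eq, is_derive_unique, is_derive_expsum.
Qed.

Lemma expsum_opp a p b q x : expsum a p b q (- x) = expsum a (- p) b (- q) x.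
Proof.
  unfold expsum; replace (p * - x) with (- p * x) by ring.
  replace (q * - x) with (- q * x) by ring; reflexivity.
Qed.

Lemma exp_le_1 t : t <= 0 -> exp t <= 1.
Proof. rewrite <- exp_0; intros [Ht|Ht]; [left; apply exp_increasing | rewrite Ht]; lra. Qed.

Section ExpsumMonotone.

Variables a p b q : R.
Hypotheses (ha : 0 < a) (hp : 0 < p) (hb : b < 0) (hq : q < 0).

Lemma expsum_derive_pos x : 0 < expsum (a * p) p (b * q) q x.
Proof.
  unfold expsum. pose proof (exp_pos (p * x)). pose proof (exp_pos (q * x)).
  assert (0 < a * p) by nra. assert (0 < b * q) by nra. nra.
Qed.

Lemma expsum_increasing x y : x < y -> expsum a p b q x < expsum a p b q y.
Proof.
  intro Hxy; apply (incr_function _ m_infty p_infty (expsum (a * p) p (b * q) q)); simpl; auto.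
  - intros; apply is_derive_expsum.
  - intros; apply expsum_derive_pos.
Qed.

(* The witness comes from [e^t >= 1 + t] on the growing term and [e^(q x) <= 1]. *)
Lemma expsum_unbounded_above y : exists x, y <= expsum a p b q x.
Proof.
  set (x := (Rabs y - b) / (a * p)).
  assert (Hx : 0 <= x) by (unfold x; apply Rdiv_le_0_compat; [pose proof (Rabs_pos y) |]; nra).
  exists x. unfold expsum.
  pose proof (exp_ineq1_le (p * x)). pose proof (Rle_abs y).
  assert (exp (q * x) <= 1) by (apply exp_le_1; nra).
  assert (Ex : a * p * x = Rabs y - b) by (unfold x; field; nra).
  nra.
Qed.

End ExpsumMonotone.

Lemma expsum_surjective a p b q : 0 < a -> 0 < p -> b < 0 -> q < 0 ->
  forall y, exists x, expsum a p b q x = y.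
Proof.
  intros ha hp hb hq y.
  destruct (expsum_unbounded_above a p b q ha hp hb hq y) as [x1 Hx1].
  destruct (expsum_unbounded_above (- b) (- q) (- a) (- p)) with (- y) as [x2 Hx2]; try lra.
  replace (expsum (- b) (- q) (- a) (- p) x2) with (- expsum a p b q (- x2)) in Hx2
    by (rewrite expsum_opp; unfold expsum; ring).
  assert (Hcont : continuity (expsum a p b q)).
  { intro x. apply derivable_continuous_pt. eexists. apply is_derive_Reals, is_derive_expsum. }
  destruct (IVT_gen _ (- x2) x1 y Hcont) as [x [_ Hx]].
  - split; [apply Rle_trans with (expsum a p b q (- x2)); [apply Rmin_l | lra]
          | apply Rle_trans with (expsum a p b q x1); [lra | apply Rmax_r]].
  - exists x; exact Hx.
Qed.

Lemma id_mul_cos_le_sin t : 0 <= t <= PI -> t * cos t <= sin t.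
Proof.
  intro Ht. destruct (Req_dec t 0) as [->|Ht0]; [rewrite sin_0; lra |].
  destruct (MVT_cor2 (fun t => sin t - t * cos t) (fun t => t * sin t) 0 t) as [m [Em Hm]].
  - lra.
  - intros m _. apply is_derive_Reals. auto_derive; auto. ring.
  - rewrite sin_0, cos_0 in Em.
    assert (0 <= sin m) by (apply sin_ge_0; lra).
    assert (0 <= m * sin m * (t - 0)) by (apply Rmult_le_pos; [apply Rmult_le_pos |]; lra).
    lra.
Qed.

Lemma mul_sin_le_mul_sin x y : 0 < x -> x <= y -> y <= PI / 2 -> x * sin y <= y * sin x.
Proof.
  intros Hx Hxy Hy. pose proof PI_RGT_0.
  destruct (Req_dec x y) as [->|Hne]; [lra |].
  destruct (MVT_cor2 (fun t => sin t / t) (fun t => (t * cos t - sin t) / t ^ 2) x y)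
    as [m [Em Hm]].
  - lra.
  - intros m Hm. apply is_derive_Reals. auto_derive; [lra | field; lra].
  - assert (m * cos m - sin m <= 0) by (pose proof (id_mul_cos_le_sin m); lra).
    assert ((m * cos m - sin m) / m ^ 2 <= 0).
    { apply Rmult_le_0_r; auto. left; apply Rinv_0_lt_compat; nra. }
    assert (Hdiv : sin y / y <= sin x / x) by nra.
    apply Rmult_le_compat_r with (r := x * y) in Hdiv; [| nra].
    replace (sin y / y * (x * y)) with (x * sin y) in Hdiv by (field; lra).
    replace (sin x / x * (x * y)) with (y * sin x) in Hdiv by (field; lra).
    exact Hdiv.
Qed.

Lemma sin_sqr_sub a b : sin b ^ 2 - sin a ^ 2 = sin (a + b) * sin (b - a).
Proof.
  rewrite sin_plus, sin_minus. pose proof (sin2_cos2 a). pose proof (sin2_cos2 b).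
  unfold Rsqr in *. nra.
Qed.

Section Rho.

Variables q1 q2 : R.
Hypotheses (hq1 : 0 < q1) (hq12 : q1 < q2) (hq2 : q2 <= 1).

Let A := q1 * PI / 2.
Let B := q2 * PI / 2.
Let D := (q2 - q1) * PI / 2.

Let angles : 0 < A /\ A < B /\ B <= PI / 2 /\ 0 < D /\ D < B /\ B - A = D.
Proof. pose proof PI_RGT_0. unfold A, B, D; repeat split; nra. Qed.

Let sin_D_pos : 0 < sin D.
Proof. pose proof angles; pose proof PI_RGT_0; apply sin_gt_0; lra. Qed.

Lemma rho1_pos : 0 < rho1 q1 q2.
Proof.
  pose proof angles; pose proof PI_RGT_0. unfold rho1; fold A D.
  apply Rdiv_lt_0_compat; [apply sin_gt_0; lra | exact sin_D_pos].
Qed.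

Lemma rho2_gt_1 : 1 < rho2 q1 q2.
Proof.
  pose proof angles. unfold rho2; fold B D. apply Rlt_div_r; auto. rewrite Rmult_1_l.
  apply sin_increasing_1; lra.
Qed.

Lemma rho_ratio_le : q1 * rho2 q1 q2 <= q2 * rho1 q1 q2.
Proof.
  pose proof angles; pose proof PI_RGT_0. unfold rho1, rho2; fold A B D.
  assert (A * sin B <= B * sin A) by (apply mul_sin_le_mul_sin; lra).
  assert (q1 * sin B <= q2 * sin A).
  { unfold A, B in *. nra. }
  unfold Rdiv; rewrite <- !Rmult_assoc.
  apply Rmult_le_compat_r; [left; apply Rinv_0_lt_compat |]; auto.
Qed.

Lemma rho_sqr_sub : (q2 - q1) * rho2 q1 q2 <= q2 * (rho2 q1 q2 ^ 2 - rho1 q1 q2 ^ 2).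
Proof.
  pose proof angles; pose proof PI_RGT_0. unfold rho1, rho2; fold A B D.
  assert (D * sin B <= B * sin D) by (apply mul_sin_le_mul_sin; lra).
  assert (Hsub : (q2 - q1) * sin B <= q2 * sin D).
  { unfold B, D in *. nra. }
  assert (Hsum : sin D <= sin (A + B)).
  { destruct (Rle_dec (A + B) (PI / 2)).
    - apply sin_incr_1; lra.
    - rewrite <- (sin_PI_x (A + B)). apply sin_incr_1; lra. }
  assert (Esqr : sin B ^ 2 - sin A ^ 2 = sin (A + B) * sin D)
    by (rewrite sin_sqr_sub; do 2 f_equal; lra).
  replace (q2 * ((sin B / sin D) ^ 2 - (sin A / sin D) ^ 2))
    with (q2 * (sin B ^ 2 - sin A ^ 2) / sin D ^ 2) by (field; lra).
  rewrite Esqr. replace (q2 * (sin (A + B) * sin D) / sin D ^ 2)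
    with (q2 * sin (A + B) / sin D) by (field; lra).
  unfold Rdiv; rewrite <- Rmult_assoc.
  apply Rmult_le_compat_r; [left; apply Rinv_0_lt_compat | nra]; auto.
Qed.

End Rho.

Section LogCurve.

Variables c q1 q2 r1 r2 : R.
Hypotheses (hc : 0 < c) (hq1 : 0 < q1) (hq12 : q1 < q2) (hr1 : 0 < r1) (hr2 : 0 < r2).
Hypothesis hratio : q1 * r2 <= q2 * r1.
Hypothesis hsqr : (q2 - q1) * r2 <= q2 * (r2 ^ 2 - r1 ^ 2).

Definition b_log : R -> R := expsum r1 q2 (- (c * r2)) (- q1).
Definition a_log : R -> R := expsum (c * r1) (- q2) (- r2) q1.
Definition b_log' : R -> R := expsum (r1 * q2) q2 (c * r2 * q1) (- q1).
Definition a_log' : R -> R := expsum (- (c * r1 * q2)) (- q2) (- (r2 * q1)) q1.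
Definition slope (L : R) : R := a_log' L / b_log' L.

Lemma is_derive_b_log L : is_derive b_log L (b_log' L).
Proof.
  unfold b_log'; replace (c * r2 * q1) with (- (c * r2) * - q1) by ring.
  apply is_derive_expsum.
Qed.

Lemma is_derive_a_log L : is_derive a_log L (a_log' L).
Proof.
  unfold a_log'; replace (- (c * r1 * q2)) with (c * r1 * - q2) by ring.
  replace (- (r2 * q1)) with (- r2 * q1) by ring.
  apply is_derive_expsum.
Qed.

Lemma b_log'_pos L : 0 < b_log' L.
Proof.
  unfold b_log', expsum. pose proof (exp_pos (q2 * L)). pose proof (exp_pos (- q1 * L)).
  assert (0 < r1 * q2) by nra. assert (0 < c * r2 * q1) by (repeat apply Rmult_lt_0_compat; lra).
  nra.
Qed.

Lemma b_log_surjective y : exists L, b_log L = y.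
Proof. unfold b_log; apply expsum_surjective; nra. Qed.

Lemma a_log_reflect L : a_log L = expsum (c * r1) q2 (- r2) (- q1) (- L).
Proof. unfold a_log; rewrite expsum_opp, Ropp_involutive; reflexivity. Qed.

Lemma a_log_decreasing x y : x < y -> a_log y < a_log x.
Proof. intro Hxy; rewrite !a_log_reflect; apply expsum_increasing; nra. Qed.

Lemma a_log_surjective y : exists L, a_log L = y.
Proof.
  destruct (expsum_surjective (c * r1) q2 (- r2) (- q1)) with y as [L HL]; try nra.
  exists (- L); rewrite a_log_reflect, Ropp_involutive; exact HL.
Qed.

Lemma slope_nondecreasing x y : x <= y -> slope x <= slope y.
Proof.
  set (a'' := expsum (- (c * r1 * q2) * - q2) (- q2) (- (r2 * q1) * q1) q1).
  set (b'' := expsum (r1 * q2 * q2) q2 (c * r2 * q1 * - q1) (- q1)).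
  apply (nondecreasing_of_derive_nonneg slope
    (fun L => (a'' L * b_log' L - a_log' L * b'' L) / b_log' L ^ 2)).
  - intro L. apply is_derive_div; [apply is_derive_expsum | apply is_derive_expsum |].
    apply Rgt_not_eq, b_log'_pos.
  - intro L. apply Rdiv_le_0_compat; [| pose proof (b_log'_pos L); nra].
    unfold a'', b'', a_log', b_log', expsum.
    pose proof (exp_pos (q1 * L)) as HX. pose proof (exp_pos (q2 * L)) as HY.
    replace (- q1 * L) with (- (q1 * L)) by ring; replace (- q2 * L) with (- (q2 * L)) by ring.
    rewrite !exp_Ropp.
    set (X := exp (q1 * L)) in *; set (Y := exp (q2 * L)) in *.
    assert (Hcube : q1 ^ 3 * r2 ^ 2 <= q2 ^ 3 * r1 ^ 2).
    { replace (q1 ^ 3 * r2 ^ 2) with (q1 * (q1 * r2) ^ 2) by ring.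
      replace (q2 ^ 3 * r1 ^ 2) with (q2 * (q2 * r1) ^ 2) by ring.
      apply Rmult_le_compat; try lra; [apply pow2_ge_0 |].
      apply pow_incr; split; [apply Rmult_le_pos |]; lra. }
    replace (_ - _) with (2 * c * (q2 ^ 3 * r1 ^ 2 - q1 ^ 3 * r2 ^ 2)
      + q1 * q2 * r1 * r2 * (q2 - q1) * (c ^ 2 / (X * Y) + X * Y)) by (field; lra).
    apply Rplus_le_le_0_compat; [nra |].
    apply Rmult_le_pos; [repeat apply Rmult_le_pos; lra |].
    assert (0 < X * Y) by nra. assert (0 < c ^ 2 / (X * Y)) by (apply Rdiv_lt_0_compat; nra). lra.
Qed.

(* Both bounds reduce to this inequality, with [(x, y) = (e^((q1+q2)L), c)] when
   [b > 0] and [(x, y) = (c, e^((q1+q2)L))] when [b < 0]. *)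
Lemma rho_mix_le x y : 0 <= x -> r2 * y <= r1 * x ->
  q1 * (r1 * x - r2 * y) + (q2 - q1) * x <= q2 * (r2 * x - r1 * y).
Proof.
  intros Hx Hxy.
  assert (0 <= (q2 * r1 - q1 * r2) * (r1 * x - r2 * y)) by (apply Rmult_le_pos; lra).
  assert (0 <= x * (q2 * (r2 ^ 2 - r1 ^ 2) - (q2 - q1) * r2)) by (apply Rmult_le_pos; lra).
  apply Rmult_le_reg_l with r2; [exact hr2 | nra].
Qed.

Lemma b_log_mul_exp L : b_log L * exp (q1 * L) = r1 * exp ((q1 + q2) * L) - c * r2.
Proof.
  unfold b_log, expsum. rewrite Rmult_plus_distr_r, !Rmult_assoc, <- !exp_plus.
  replace (q2 * L + q1 * L) with ((q1 + q2) * L) by ring.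
  replace (- q1 * L + q1 * L) with 0 by ring. rewrite exp_0; ring.
Qed.

Lemma a_log_mul_exp L : a_log L * exp (q2 * L) = c * r1 - r2 * exp ((q1 + q2) * L).
Proof.
  unfold a_log, expsum. rewrite Rmult_plus_distr_r, !Rmult_assoc, <- !exp_plus.
  replace (q1 * L + q2 * L) with ((q1 + q2) * L) by ring.
  replace (- q2 * L + q2 * L) with 0 by ring. rewrite exp_0; ring.
Qed.

Lemma a_log_le_of_b_log_pos L : 0 < b_log L -> a_log L <= - Rpower (b_log L) (q1 / q2).
Proof.
  intro Hb. set (t := q1 / q2). set (s := exp ((q1 + q2) * L)).
  set (u := b_log L * exp (q1 * L)).
  assert (Hs : 0 < s) by apply exp_pos.
  assert (Hu : 0 < u) by (apply Rmult_lt_0_compat; [exact Hb | apply exp_pos]).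
  assert (Ht : 0 <= t <= 1) by (unfold t; split; [apply Rdiv_le_0_compat | apply (Rdiv_le_1 q1 q2)]; lra).
  assert (Hpow : Rpower (b_log L) t * exp (q2 * L) = Rpower u t * Rpower s (1 - t)).
  { unfold Rpower, u, s. rewrite ln_mult, !ln_exp, <- !exp_plus by (auto; apply exp_pos).
    f_equal. unfold t. field. lra. }
  assert (Hmix : t * u + (1 - t) * s <= r2 * s - c * r1).
  { pose proof (b_log_mul_exp L) as Eu; fold u s in Eu.
    apply Rmult_le_reg_l with q2; [lra |].
    replace (q2 * (t * u + (1 - t) * s)) with (q1 * u + (q2 - q1) * s) by (unfold t; field; lra).
    rewrite Eu. pose proof (rho_mix_le s c). nra. }
  pose proof (Rpower_weighted_am_gm u s t Hu Hs Ht).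
  pose proof (a_log_mul_exp L) as Ea; fold s in Ea.
  apply Rmult_le_reg_r with (exp (q2 * L)); [apply exp_pos | lra].
Qed.

Lemma a_log_le_of_b_log_neg L : b_log L < 0 ->
  a_log L <= Rpower (- b_log L) (q2 / q1) * Rpower c (1 - q2 / q1).
Proof.
  intro Hb. set (t := q1 / q2). set (p := q2 / q1).
  set (s := exp ((q1 + q2) * L)). set (Y := exp (q2 * L)).
  set (Z := Rpower (- b_log L) p * Rpower c (1 - p)).
  assert (Hs : 0 < s) by apply exp_pos.
  assert (HZY : 0 < Z * Y) by (unfold Z, Y, Rpower; rewrite <- !exp_plus; apply exp_pos).
  assert (Ht : 0 <= t <= 1) by (unfold t; split; [apply Rdiv_le_0_compat | apply (Rdiv_le_1 q1 q2)]; lra).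
  pose proof (b_log_mul_exp L) as Eb; fold s in Eb.
  pose proof (a_log_mul_exp L) as Ea; fold s Y in Ea.
  apply Rmult_le_reg_r with Y; [apply exp_pos | rewrite Ea].
  destruct (Rle_or_lt (c * r1 - r2 * s) 0) as [Ha | Ha]; [lra |].
  assert (Hpow : Rpower (Z * Y) t * Rpower c (1 - t) = - b_log L * exp (q1 * L)).
  { replace (- b_log L * exp (q1 * L)) with (exp (ln (- b_log L) + q1 * L))
      by (rewrite exp_plus, exp_ln; lra).
    unfold Z, Y, Rpower. rewrite <- !exp_plus, ln_exp.
    f_equal. unfold t, p. field. lra. }
  assert (Hamgm : q2 * (- b_log L * exp (q1 * L)) <= q1 * (Z * Y) + (q2 - q1) * c).
  { rewrite <- Hpow.
    replace (q1 * (Z * Y) + (q2 - q1) * c) with (q2 * (t * (Z * Y) + (1 - t) * c))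
      by (unfold t; field; lra).
    apply Rmult_le_compat_l; [lra | apply Rpower_weighted_am_gm; auto]. }
  pose proof (rho_mix_le c s).
  apply Rmult_le_reg_l with q1; [exact hq1 | nra].
Qed.

Lemma a_log_nonpos_of_b_log_zero L : b_log L = 0 -> a_log L <= 0.
Proof.
  intro Hb. pose proof (b_log_mul_exp L) as Eb; rewrite Hb, Rmult_0_l in Eb.
  pose proof (exp_pos ((q1 + q2) * L)).
  pose proof (rho_mix_le (exp ((q1 + q2) * L)) c).
  apply Rmult_le_reg_r with (exp (q2 * L)); [apply exp_pos |].
  rewrite a_log_mul_exp, Rmult_0_l. nra.
Qed.

Definition a_star (b : R) : R := a_log (inverse b_log b).

Lemma b_log_inverse b : b_log (inverse b_log b) = b.
Proof. apply f_inverse, b_log_surjective. Qed.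

Lemma a_star_b_log L : a_star (b_log L) = a_log L.
Proof.
  unfold a_star; f_equal.
  apply (inverse_f b_log b_log' is_derive_b_log b_log'_pos b_log_surjective).
Qed.

Lemma a_star_decreasing : strictly_decreasing a_star.
Proof.
  intros x y Hxy; apply a_log_decreasing.
  apply (inverse_increasing b_log b_log' is_derive_b_log b_log'_pos b_log_surjective), Hxy.
Qed.

Lemma a_star_bijective : bijective_fun a_star.
Proof.
  split.
  - intros x y Exy. destruct (Rtotal_order x y) as [H|[H|H]]; auto;
      apply a_star_decreasing in H; lra.
  - intro y. destruct (a_log_surjective y) as [L HL].
    exists (b_log L); rewrite a_star_b_log; exact HL.
Qed.

Lemma is_derive_a_star b : is_derive a_star b (slope (inverse b_log b)).
Proof.
  unfold slope, Rdiv; rewrite Rmult_comm.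
  apply (is_derive_comp a_log (inverse b_log)); [apply is_derive_a_log |].
  apply (is_derive_inverse b_log b_log' is_derive_b_log b_log'_pos b_log_surjective).
Qed.

Lemma a_star_convex : convex_fun a_star.
Proof.
  apply (convex_of_derive_nondecreasing _ _ is_derive_a_star).
  intros x y Hxy; apply slope_nondecreasing.
  apply (inverse_le b_log b_log' is_derive_b_log b_log'_pos b_log_surjective); exact Hxy.
Qed.

Lemma a_star_smooth : smooth a_star.
Proof.
  apply smooth_of_derivable_n; intro n.
  apply (derivable_n_comp_ode n (inverse b_log) (fun L => 1 / b_log' L)).
  - intro b; rewrite Rdiv_1_l.
    apply (is_derive_inverse b_log b_log' is_derive_b_log b_log'_pos b_log_surjective).
  - intro m; apply derivable_n_div; [intro L; apply Rgt_not_eq, b_log'_pos |].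
    apply derivable_n_expsum.
  - apply derivable_n_expsum.
Qed.

Lemma a_star_le_of_neg b : b < 0 ->
  a_star b <= Rpower (- b) (q2 / q1) * Rpower c (1 - q2 / q1).
Proof.
  pose proof (a_log_le_of_b_log_neg (inverse b_log b)) as H.
  rewrite b_log_inverse in H; exact H.
Qed.

Lemma a_star_nonpos_at_0 : a_star 0 <= 0.
Proof. apply a_log_nonpos_of_b_log_zero, b_log_inverse. Qed.

Lemma a_star_le_of_pos b : 0 < b -> a_star b <= - Rpower b (q1 / q2).
Proof.
  pose proof (a_log_le_of_b_log_pos (inverse b_log b)) as H.
  rewrite b_log_inverse in H; exact H.
Qed.

End LogCurve.

Lemma b_curve_eq c q1 q2 w :
  b_curve c q1 q2 w = b_log c q1 q2 (rho1 q1 q2) (rho2 q1 q2) (ln w).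
Proof. unfold b_curve, b_log, expsum, Rpower; ring. Qed.

Lemma a_curve_eq c q1 q2 w :
  a_curve c q1 q2 w = a_log c q1 q2 (rho1 q1 q2) (rho2 q1 q2) (ln w).
Proof. unfold a_curve, a_log, expsum, Rpower; ring. Qed.

Theorem lemma1 (c q1 q2 : R) (hc : 0 < c) (hq1 : 0 < q1) (hq12 : q1 < q2) (hq2 : q2 <= 1) :
  0 < rho1 q1 q2 /\ 1 < rho2 q1 q2 /\
  exists astar : R -> R,
    curve_is_graph c q1 q2 astar /\
    smooth astar /\ strictly_decreasing astar /\ convex_fun astar /\ bijective_fun astar /\
    (forall b, b < 0 -> astar b <= Rpower (- b) (q2 / q1) * Rpower c (1 - q2 / q1)) /\
    astar 0 <= 0 /\
    (forall b, 0 < b -> astar b <= - Rpower b (q1 / q2)).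
Proof.
  pose proof (rho1_pos q1 q2 hq1 hq12 hq2) as hr1.
  pose proof (rho2_gt_1 q1 q2 hq1 hq12 hq2) as hr2.
  pose proof (rho_ratio_le q1 q2 hq1 hq12 hq2) as hratio.
  pose proof (rho_sqr_sub q1 q2 hq1 hq12 hq2) as hsqr.
  split; [exact hr1 | split; [exact hr2 |]].
  assert (hr2_pos : 0 < rho2 q1 q2) by lra.
  exists (a_star c q1 q2 (rho1 q1 q2) (rho2 q1 q2)).
  split; [split | split; [| split; [| split; [| split; [| split; [| split]]]]]].
  - intros w _. rewrite b_curve_eq, a_curve_eq. apply a_star_b_log; auto.
  - intro b. destruct (b_log_surjective c q1 q2 (rho1 q1 q2) (rho2 q1 q2)) with b
      as [L HL]; auto.
    exists (exp L). rewrite b_curve_eq, ln_exp. split; [apply exp_pos | exact HL].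
  - apply a_star_smooth; auto.
  - apply a_star_decreasing; auto.
  - apply a_star_convex; auto.
  - apply a_star_bijective; auto.
  - apply a_star_le_of_neg; auto.
  - apply a_star_nonpos_at_0; auto.
  - apply a_star_le_of_pos; auto.
Qed.
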